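(* For every $k\ge 0$, a permutation $\pi$ is sorted by the left-greedy procedure on the $\mathfrak{D}^k\mathfrak{I}$ machine if and only if $\pi$ avoids the pattern $231$. In particular, $Sort^{(lg)}_k$ is a permutation class with basis $\{231\}$.
   Context: The $\mathfrak{D}^k\mathfrak{I}$ machine consists of $k$ stacks $D_1,\dots,D_k$ (decreasing stacks) followed in series by a stack $I$ (increasing stack). The input permutation is read from left to right. The elements of each $D_i$ must be in decreasing order from top to bottom (top is largest), and those of $I$ in increasing order from top to bottom (top is smallest). Operations: $d_0$ pushes the next input element into $D_1$ (into $I$ if $k=0$); $d_i$ ($1\le i\le k-1$) moves the top of $D_i$ to $D_{i+1}$; $d_k$ moves the top of $D_k$ to $I$; $d_{k+1}$ pops the top of $I$ and appends it to the output. An operation is legal if it respects the stack restrictions; $d_{k+1}$ is legal if the popped element is the smallest among the elements not yet output, and also if no other operation is legal. The left-greedy procedure performs, at each step, the legal operation $d_j$ with the largest index $j$ (priority $d_{k+1}\rhd d_k\rhd\cdots\rhd d_1\rhd d_0$). $Sort^{(lg)}_k$ is the set of permutations whose output under this procedure is the identity. *)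

From mathcomp Require Import all_boot.
Set Implicit Arguments. Unset Strict Implicit. Unset Printing Implicit Defensive.

(* State of the D^k I machine.
   - inp : remaining input (read left to right, head = next element)
   - ds  : the k decreasing stacks D_1..D_k (ds`_(i-1) = D_i), head = top
   - istk: the increasing stack I, head = top
   - out : output produced so far, in order. *)
Record mstate := MState { inp : seq nat; ds : seq (seq nat);
                          istk : seq nat; out : seq nat }.

Definition okD (D : seq nat) (x : nat) : bool :=
  if D is y :: _ then y < x else true.
Definition okI (I : seq nat) (x : nat) : bool :=
  if I is y :: _ then x < y else true.

Definition src (j : nat) (st : mstate) : seq nat :=
  if j == 0 then inp st else nth [::] (ds st) j.-1.

(* legality of d_j for 0 <= j <= k (moves, not the pop d_(k+1)) *)
Definition legal_move (k j : nat) (st : mstate) : bool :=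
  if src j st is x :: _ then
    (if j < k then okD (nth [::] (ds st) j) x else okI (istk st) x)
  else false.

Definition remaining (st : mstate) : seq nat :=
  inp st ++ flatten (ds st) ++ istk st.

Definition legal_pop (k : nat) (st : mstate) : bool :=
  if istk st is x :: _ then
    all (fun y => x <= y) (remaining st)
    || ~~ has (fun j => legal_move k j st) (iota 0 k.+1)
  else false.

Definition do_move (k j : nat) (st : mstate) : mstate :=
  match src j st with
  | [::] => st
  | x :: rest =>
    let inp' := if j == 0 then rest else inp st in
    let ds1 := if j == 0 then ds st else set_nth [::] (ds st) j.-1 rest in
    if j < k then MState inp' (set_nth [::] ds1 j (x :: nth [::] ds1 j))
                         (istk st) (out st)
    else MState inp' ds1 (x :: istk st) (out st)
  end.

Definition do_pop (st : mstate) : mstate :=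
  match istk st with
  | [::] => st
  | x :: rest => MState (inp st) (ds st) rest (rcons (out st) x)
  end.

(* one step of the left-greedy procedure: the legal operation with the
   largest index (d_(k+1) > d_k > ... > d_0); no-op if none is legal *)
Definition lg_step (k : nat) (st : mstate) : mstate :=
  if legal_pop k st then do_pop st
  else match [seq j <- rev (iota 0 k.+1) | legal_move k j st] with
       | j :: _ => do_move k j st
       | [::] => st
       end.

(* Every operation moves one element one position forward, and each element
   travels input -> D_1 -> ... -> D_k -> I -> output, i.e. k+2 moves, so the
   procedure performs exactly size s * (k+2) operations. *)
Definition lg_run (k : nat) (s : seq nat) : mstate :=
  iter (size s * k.+2) (lg_step k) (MState s (nseq k [::]) [::] [::]).

Definition lg_sortable (k : nat) (s : seq nat) : Prop :=
  out (lg_run k s) = iota 1 (size s).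

Definition contains_pattern (p s : seq nat) : Prop :=
  exists t : seq nat, [/\ subseq t s, size t = size p &
    forall i j, i < size p -> j < size p ->
      (nth 0 t i < nth 0 t j) = (nth 0 p i < nth 0 p j)].

Definition avoids (p s : seq nat) : Prop := ~ contains_pattern p s.

(* In a configuration whose decreasing stacks are all empty, the left-greedy
   procedure either pops the top y of I, when y is the smallest element not yet
   output, or lets the next input letter x slide through the empty stacks
   D_1, ..., D_k.  If x < y, then x enters I and the stacks are empty again.
   Otherwise x stays on top of D_k and blocks d_k for as long as y is in I, so
   y is output before some smaller z that is still in the input: the output is
   not the identity, and y, x, z is an occurrence of 231.  Hence, by induction
   on the number of remaining operations, the procedure sorts from such a
   configuration iff no occurrence of 231 is pending, i.e. has its 2 in I and
   its 3 and 1 in the input, or lies entirely in the input. *)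

From mathcomp Require Import all_boot zify.
Set Implicit Arguments. Unset Strict Implicit. Unset Printing Implicit Defensive.

Lemma flatten_nseq_nil (T : Type) k : flatten (nseq k ([::] : seq T)) = [::].
Proof. by elim: k. Qed.

Lemma nth_nseq_nil (T : Type) k i : nth [::] (nseq k ([::] : seq T)) i = [::].
Proof. by rewrite nth_nseq; case: ifP. Qed.

Lemma set_nth_nseq_nil (T : Type) k j :
  j < k -> set_nth [::] (nseq k ([::] : seq T)) j [::] = nseq k [::].
Proof. by elim: k j => [|k IHk] [|j] //= /IHk ->. Qed.

Lemma flatten_set_nth_nseq_nil (T : Type) k j (x : T) :
  j < k -> flatten (set_nth [::] (nseq k [::]) j [:: x]) = [:: x].
Proof.
by elim: k j => [|k IHk] [|j] //= => [_|/IHk ->]; rewrite ?flatten_nseq_nil.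
Qed.

Lemma filter_rev_iota_head (P : pred nat) k i :
  i <= k -> P i -> (forall j, i < j <= k -> ~~ P j) ->
  exists r, [seq j <- rev (iota 0 k.+1) | P j] = i :: r.
Proof.
elim: k => [|k IHk] le_ik Pi maxi.
  by move: le_ik Pi; rewrite leqn0 => /eqP -> /= ->; eexists.
rewrite -addn1 iotaD rev_cat /=.
case: (ltngtP i k.+1) le_ik => // [lt_ik _|eq_ik _]; last by rewrite -eq_ik Pi; eexists.
rewrite (negbTE (maxi k.+1 _)); last by rewrite lt_ik leqnn.
by apply: IHk => // j /andP[lt_ij le_jk]; apply: maxi; rewrite lt_ij; lia.
Qed.

Lemma lg_step_greedy k j st :
  ~~ legal_pop k st -> j <= k -> legal_move k j st ->
  (forall i, j < i <= k -> ~~ legal_move k i st) ->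
  lg_step k st = do_move k j st.
Proof.
move=> /negbTE nopop le_jk legal_j maxj; rewrite /lg_step nopop.
by have [r ->] := @filter_rev_iota_head (legal_move k ^~ st) k j le_jk legal_j maxj.
Qed.

Lemma lg_step_cases k st :
  [\/ lg_step k st = do_pop st,
      exists2 j, j <= k & legal_move k j st /\ lg_step k st = do_move k j st
    | lg_step k st = st].
Proof.
rewrite /lg_step; case: legal_pop; first by constructor 1.
case E: [seq j <- _ | _] => [|j r]; [by constructor 3 | constructor 2].
have : j \in [seq j <- rev (iota 0 k.+1) | legal_move k j st] by rewrite E mem_head.
by rewrite mem_filter mem_rev mem_iota => /andP[legal_j /= lt_jk]; exists j.
Qed.

Lemma prefix_out_lg_step k st : prefix (out st) (out (lg_step k st)).
Proof.
have [->|[j _ [_ ->]]|->] := lg_step_cases k st; last exact: prefix_refl.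
- by rewrite /do_pop; case: (istk st) => [|x I]; rewrite ?prefix_refl ?prefix_rcons.
- by rewrite /do_move; case: (src j st) => [|x r]; [|case: ifP]; rewrite prefix_refl.
Qed.

Definition clean k inp I o := MState inp (nseq k ([::] : seq nat)) I o.

(* The next input letter [x] after [i] moves: on [D_i], or still in the input
   when [i = 0]. *)
Definition transit k (x : nat) rest I o i :=
  if i == 0 then clean k (x :: rest) I o
  else MState rest (set_nth [::] (nseq k [::]) i.-1 [:: x]) I o.

Definition top_min (I inp : seq nat) :=
  if I is y :: _ then all (leq y) (inp ++ I) else false.

Lemma lg_step_pop_clean k inp y I o : top_min (y :: I) inp ->
  lg_step k (clean k inp (y :: I) o) = clean k inp I (rcons o y).
Proof.
by rewrite /lg_step /legal_pop /remaining /= flatten_nseq_nil => ->.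
Qed.

Section Transit.
Variables (k x : nat) (rest I o : seq nat).
Local Notation transit := (transit k x rest I o).

Lemma istk_transit i : istk (transit i) = I.
Proof. by rewrite /transit; case: eqP. Qed.

Lemma out_transit i : out (transit i) = o.
Proof. by rewrite /transit; case: eqP. Qed.

Lemma src_transit i : exists t, src i (transit i) = x :: t.
Proof.
rewrite /src /transit; case: eqP => [_ | i_neq0] /=; first by exists rest.
by rewrite nth_set_nth /= eqxx; exists [::].
Qed.

Lemma legal_move_transit i : i < k -> legal_move k i (transit i).
Proof.
move=> lt_ik; rewrite /legal_move /src /transit.
case: eqP => [_ | i_neq0] /=; first by rewrite lt_ik nth_nseq_nil.
rewrite !nth_set_nth /= eqxx lt_ik.
have -> : (i == i.-1) = false by lia.
by rewrite nth_nseq_nil.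
Qed.

Lemma legal_move_transit_last : legal_move k k (transit k) = okI I x.
Proof.
rewrite /legal_move /src /transit; case: eqP => [-> | k_neq0] //=.
by rewrite nth_set_nth /= eqxx ltnn.
Qed.

Lemma legal_move_transit_above i j : i < j -> legal_move k j (transit i) = false.
Proof.
move=> lt_ij; rewrite /legal_move /src /transit.
have -> : (j == 0) = false by lia.
case: eqP => [_ | i_neq0] /=; first by rewrite nth_nseq_nil.
rewrite nth_set_nth /=.
have -> : (j.-1 == i.-1) = false by lia.
by rewrite nth_nseq_nil.
Qed.

Lemma legal_pop_transit i : i <= k -> legal_move k i (transit i) ->
  legal_pop k (transit i) = top_min I (x :: rest).
Proof.
move=> le_ik legal_i; rewrite /legal_pop istk_transit.
have -> : has (legal_move k ^~ (transit i)) (iota 0 k.+1).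
  by apply/hasP; exists i; rewrite ?mem_iota.
rewrite /remaining /transit; case: eqP => [_ | i_neq0] /=.
  by case: I => [|y J] //=; rewrite orbF flatten_nseq_nil.
rewrite flatten_set_nth_nseq_nil; last by lia.
by case: I => [|y J] //=; rewrite orbF !all_cat /= andbCA.
Qed.

Lemma lg_step_transit i : i < k -> ~~ top_min I (x :: rest) ->
  lg_step k (transit i) = transit i.+1.
Proof.
move=> lt_ik no_pop; have legal_i := legal_move_transit lt_ik.
rewrite (@lg_step_greedy k i) ?(ltnW lt_ik) //; last first.
- by move=> j /andP[lt_ij _]; rewrite legal_move_transit_above.
- by rewrite legal_pop_transit ?(ltnW lt_ik).
rewrite /do_move /transit /src; case: eqP => [_ | i_neq0] /=.
  by rewrite lt_ik nth_nseq_nil.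
rewrite nth_set_nth /= ?eqxx lt_ik [set_nth _ (set_nth _ _ i.-1 _) i.-1 _]set_set_nth.
rewrite eqxx set_nth_nseq_nil ?nth_nseq_nil //; lia.
Qed.

Lemma lg_step_transit_last : okI I x -> ~~ top_min I (x :: rest) ->
  lg_step k (transit k) = clean k rest (x :: I) o.
Proof.
move=> ok_x no_pop.
have legal_k : legal_move k k (transit k) by rewrite legal_move_transit_last.
rewrite (@lg_step_greedy k k) //; last first.
- by move=> j /andP[lt_kj le_jk]; rewrite ltnNge le_jk in lt_kj.
- by rewrite legal_pop_transit.
rewrite /do_move /transit /src; case: eqP => [-> | k_neq0] //=.
by rewrite nth_set_nth /= eqxx ltnn set_set_nth eqxx set_nth_nseq_nil //; lia.
Qed.

Lemma iter_transit i : i <= k -> ~~ top_min I (x :: rest) ->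
  iter i (lg_step k) (clean k (x :: rest) I o) = transit i.
Proof.
move=> le_ik no_pop; elim: i le_ik => [|i IHi] le_ik //=.
by rewrite IHi ?lg_step_transit //; lia.
Qed.

Lemma iter_enter : okI I x -> ~~ top_min I (x :: rest) ->
  iter k.+1 (lg_step k) (clean k (x :: rest) I o) = clean k rest (x :: I) o.
Proof. by move=> ok_x no_pop; rewrite iterS iter_transit ?lg_step_transit_last. Qed.

End Transit.

Definition top_ge (m : nat) (D : seq nat) := if D is h :: _ then m <= h else false.

Lemma do_move_below k j st m : j < k -> legal_move k j st ->
  top_ge m (src k st) ->
  [/\ istk (do_move k j st) = istk st, out (do_move k j st) = out st
    & top_ge m (src k (do_move k j st))].
Proof.
move=> lt_jk; rewrite /legal_move /do_move lt_jk.
case src_j: (src j st) => [//|v r] okD_v top_m; split=> //.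
have k_neq0 : (k == 0) = false by lia.
have src_k : src k st = nth [::] (ds st) k.-1 by rewrite /src k_neq0.
set ds1 := if j == 0 then ds st else _.
have ds1_j : nth [::] ds1 j = nth [::] (ds st) j.
  by rewrite /ds1; case: eqP => // j_neq0; rewrite nth_set_nth /=; case: eqP => //; lia.
have ds1_k : nth [::] ds1 k.-1 = src k st.
  rewrite src_k /ds1; case: eqP => // j_neq0.
  by rewrite nth_set_nth /=; case: eqP => //; lia.
rewrite /src /= k_neq0 ds1_j nth_set_nth /=.
case: eqP => [eq_kj | _]; last by rewrite ds1_k.
by move: okD_v; rewrite -eq_kj -src_k; case: (src k st) top_m => //= h _; lia.
Qed.

Lemma prefix_iota_mem o m a b :
  prefix o (iota 1 m) -> b \in o -> 0 < a <= b -> a \in o.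
Proof. by rewrite prefixE take_iota => /eqP <-; rewrite !mem_iota; lia. Qed.

Section Trapped.
Variables (k n y z : nat).
Hypotheses (z_gt0 : 0 < z) (z_le_n : z <= n) (lt_zy : z < y).

(* The top of [D_k] being at least [y] makes [d_k] illegal while [y] is in [I],
   and moves onto [D_k] only raise that top; so [I] can only be popped, and [y]
   leaves it before [z] can arrive. *)
Definition trapped st :=
  [/\ y \in istk st, sorted ltn (istk st), z \notin istk st, z \notin out st
    & top_ge y (src k st)].

Definition doomed st := ~~ prefix (out st) (iota 1 n) \/ trapped st.

Lemma doomed_do_pop st : trapped st -> doomed (do_pop st).
Proof.
case=> + + + z_notin_o top_y; rewrite /do_pop.
case: (istk st) => [//|a I] y_aI sorted_aI z_notin_aI.
have [eq_ay | ne_ay] := eqVneq a y.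
  left; apply/negP => /= prefix_o.
  have y_o : y \in rcons (out st) a by rewrite mem_rcons eq_ay mem_head.
  have : z \in rcons (out st) a.
    by apply: (prefix_iota_mem prefix_o y_o); rewrite z_gt0 ltnW.
  by rewrite mem_rcons in_cons eq_ay (ltn_eqF lt_zy) (negbTE z_notin_o).
move: y_aI z_notin_aI; rewrite !in_cons eq_sym (negbTE ne_ay).
move=> y_I /norP[ne_za z_notin_I].
right; split=> //=; first exact: path_sorted sorted_aI.
by rewrite mem_rcons in_cons negb_or ne_za.
Qed.

Lemma trapped_no_last_move st : trapped st -> legal_move k k st = false.
Proof.
case=> y_I sorted_I _ _; rewrite /legal_move ltnn.
case: (src k st) => [//|h t] /= le_yh; case: (istk st) y_I sorted_I => [//|a I] /=.
rewrite in_cons => /orP[/eqP <- | y_I] sorted_aI; first by rewrite ltnNge le_yh.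
have := allP (order_path_min ltn_trans sorted_aI) y y_I; lia.
Qed.

Lemma doomed_lg_step st : doomed st -> doomed (lg_step k st).
Proof.
case=> [not_prefix | trapped_st].
  left; apply: contra not_prefix => prefix_out.
  exact: prefix_trans (prefix_out_lg_step k st) prefix_out.
have [->|[j le_jk [legal_j ->]]|->] := lg_step_cases k st; last by right.
  exact: doomed_do_pop.
case: (ltngtP j k) le_jk => // [lt_jk _ | eq_jk _]; last first.
  by move: legal_j; rewrite eq_jk trapped_no_last_move.
case: trapped_st => y_I sorted_I z_notin_I z_notin_o top_y.
have [istk_move out_move top_y'] := do_move_below lt_jk legal_j top_y.
by right; split; rewrite ?istk_move ?out_move.
Qed.

Lemma doomed_iter st m : doomed st -> doomed (iter m (lg_step k) st).
Proof. by move=> doomed_st; elim: m => //= m; apply: doomed_lg_step. Qed.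

Lemma doomed_out st : doomed st -> out st <> iota 1 n.
Proof.
case=> [not_prefix | [_ _ _ z_notin_o _]] out_st.
  by rewrite out_st prefix_refl in not_prefix.
by rewrite out_st mem_iota in z_notin_o; lia.
Qed.

End Trapped.

Definition pending231 (I inp : seq nat) := exists a b c, c < a < b /\
  ((a \in I /\ subseq [:: b; c] inp) \/ subseq [:: a; b; c] inp).

Lemma pending231_nil s : pending231 [::] s <-> contains_pattern [:: 2; 3; 1] s.
Proof.
split=> [[a [b [c [lt_cab [[] // | abc_s]]]]] | ].
  exists [:: a; b; c]; split=> // i j.
  by case: i => [|[|[|i]]] //; case: j => [|[|[|j]]] //= _ _; lia.
case=> [[|a [|b [|c [|d t]]]] [abc_s size_t pat]] //.
have := pat 0 1 isT isT; have := pat 2 0 isT isT => /= lt_ca lt_ab.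
by exists a, b, c; split; [lia | right].
Qed.

Lemma top_min_sorted y I : sorted ltn (y :: I) -> top_min (y :: I) [::] .
Proof.
move=> sorted_yI; rewrite /= leqnn; apply: sub_all (order_path_min ltn_trans sorted_yI).
by move=> v /ltnW.
Qed.

Lemma below_top y I inp : sorted ltn (y :: I) -> ~~ top_min (y :: I) inp ->
  exists2 z, z \in inp & z < y.
Proof.
move=> sorted_yI /allPn[z]; rewrite mem_cat -ltnNge => /orP[z_inp | z_yI] lt_zy.
  by exists z.
by move: (top_min_sorted sorted_yI) => /allP/(_ z z_yI); rewrite leqNgt lt_zy.
Qed.

Lemma pending231_pop y I inp : top_min (y :: I) inp ->
  pending231 (y :: I) inp <-> pending231 I inp.
Proof.
move=> top_y; split=> [[a [b [c [lt_cab [[a_yI bc_inp] | abc_inp]]]]] | ]; last first.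
- by case=> a [b [c [lt_cab [[a_I bc_inp] | abc_inp]]]];
    exists a, b, c; split=> //; [left; rewrite in_cons a_I orbT | right].
- by exists a, b, c; split=> //; right.
exists a, b, c; split=> //; left; split=> //.
move: a_yI; rewrite in_cons => /orP[/eqP eq_ay | //].
have c_inp : c \in inp by apply: (mem_subseq bc_inp); rewrite !inE eqxx orbT.
by move: top_y => /allP/(_ c); rewrite mem_cat c_inp => /(_ isT); lia.
Qed.

Lemma pending231_enter x I rest : sorted ltn I -> okI I x ->
  pending231 (x :: I) rest <-> pending231 I (x :: rest).
Proof.
move=> sorted_I ok_x; split=> [[a [b [c [lt_cab abc]]]] | [a [b [c [lt_cab abc]]]]];
  exists a, b, c; split=> //.
- case: abc => [[] | abc_rest]; last first.
    by right; exact: subseq_trans abc_rest (subseq_cons _ _).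
  rewrite in_cons => /orP[/eqP -> bc_rest | a_I bc_rest]; first by right; rewrite /= eqxx.
  by left; split=> //; exact: subseq_trans bc_rest (subseq_cons _ _).
case: abc => [[a_I] | ] /=; last first.
  by case: eqP => [-> bc_rest | _ abc_rest]; [left; rewrite mem_head | right].
case: eqP => [eq_bx _ | _ bc_rest]; last by left; rewrite in_cons a_I orbT.
exfalso; case: I sorted_I ok_x a_I => [//|y I] sorted_yI /= lt_xy.
have y_min := allP (order_path_min ltn_trans sorted_yI).
by rewrite in_cons => /orP[/eqP | /y_min]; lia.
Qed.

Lemma pending231_stuck x rest y I : sorted ltn (y :: I) -> y < x ->
  ~~ top_min (y :: I) (x :: rest) -> pending231 (y :: I) (x :: rest).
Proof.
move=> sorted_yI lt_yx /(below_top sorted_yI)[z z_inp lt_zy].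
exists y, x, z; split; first by rewrite lt_zy.
left; split; first exact: mem_head.
move: z_inp; rewrite in_cons => /orP[/eqP eq_zx | z_rest]; first by lia.
by rewrite /= eqxx sub1seq.
Qed.

Definition on_track n inp I o :=
  [/\ sorted ltn I, o = iota 1 (size o) & perm_eq (o ++ I ++ inp) (iota 1 n)].

Lemma on_track_uniq n inp I o : on_track n inp I o -> uniq (o ++ I ++ inp).
Proof. by case=> _ _ /perm_uniq ->; apply: iota_uniq. Qed.

Lemma on_track_pending_mem n inp I o z : on_track n inp I o -> z \in inp ->
  z \notin o /\ 0 < z <= n.
Proof.
move=> track z_inp; split.
  move: (on_track_uniq track); rewrite cat_uniq => /and3P[_ /hasPn/(_ z) + _].
  by rewrite mem_cat z_inp orbT => /(_ isT).
case: track => _ _ /perm_mem/(_ z); rewrite !mem_cat z_inp !orbT mem_iota; lia.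
Qed.

Lemma on_track_pop n inp y I o : on_track n inp (y :: I) o ->
  top_min (y :: I) inp -> on_track n inp I (rcons o y).
Proof.
case=> sorted_yI o_iota perm_o top_y.
have le_on : size o <= n.
  by rewrite -(size_iota 1 n) -(perm_size perm_o) size_cat leq_addr.
have perm_rem : perm_eq ((y :: I) ++ inp) (iota (1 + size o) (n - size o)).
  by move: perm_o; rewrite {1}o_iota -{1}(subnKC le_on) iotaD perm_cat2l.
have y_next : y = (size o).+1.
  have : y \in iota (1 + size o) (n - size o) by rewrite -(perm_mem perm_rem) mem_head.
  have : (size o).+1 \in (y :: I) ++ inp.
    rewrite (perm_mem perm_rem) mem_iota add1n leqnn /=.
    by move: (perm_size perm_rem); rewrite size_iota /=; lia.
  by rewrite mem_cat orbC -mem_cat => /(allP top_y); rewrite mem_iota; lia.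
split; first exact: path_sorted sorted_yI.
  by rewrite size_rcons -[(size o).+1]addn1 iotaD -o_iota y_next add1n cats1.
by rewrite cat_rcons.
Qed.

Lemma on_track_enter n x rest I o : on_track n (x :: rest) I o -> okI I x ->
  on_track n rest (x :: I) o.
Proof.
case=> sorted_I o_iota perm_o ok_x; split=> //.
  by case: I sorted_I ok_x {perm_o} => //= y I -> ->.
by apply: perm_trans perm_o; rewrite perm_cat2l -cat1s (perm_catCA [:: x] I rest).
Qed.

Lemma on_track_blocked n x rest y I o : on_track n (x :: rest) (y :: I) o ->
  ~~ okI (y :: I) x -> y < x.
Proof.
move/on_track_uniq; rewrite !cat_uniq => /and3P[_ _ /and3P[_ /hasPn/(_ x) + _]] /=.
by rewrite mem_head in_cons => /(_ isT); case: ltngtP.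
Qed.

Lemma on_track_done n o : on_track n [::] [::] o -> o = iota 1 n.
Proof. by case=> _ o_iota /perm_size; rewrite !cats0 size_iota => <-. Qed.

Definition run_length k (inp I : seq nat) := k.+2 * size inp + size I.

Lemma stuck_run k n x rest y I o m : on_track n (x :: rest) (y :: I) o ->
  ~~ top_min (y :: I) (x :: rest) -> ~~ okI (y :: I) x -> k <= m ->
  out (iter m (lg_step k) (clean k (x :: rest) (y :: I) o)) <> iota 1 n.
Proof.
move=> track no_pop not_ok le_km.
have [sorted_yI _ _] := track.
have [z z_inp lt_zy] := below_top sorted_yI no_pop.
have [z_notin_o /andP[z_gt0 z_le_n]] := on_track_pending_mem track z_inp.
rewrite -(subnK le_km) iterD iter_transit //.
have trapped_transit : trapped k y z (transit k x rest (y :: I) o k).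
  have [t src_x] := src_transit k x rest (y :: I) o k.
  split; rewrite ?istk_transit ?out_transit ?src_x ?mem_head //=.
    by apply/negP => /(allP (top_min_sorted sorted_yI)); rewrite leqNgt lt_zy.
  by rewrite leqNgt; exact: not_ok.
exact/(doomed_out z_gt0 z_le_n lt_zy)/(doomed_iter z_gt0 z_le_n lt_zy)/or_intror.
Qed.

Lemma out_run_clean k n inp I o : on_track n inp I o ->
  out (iter (run_length k inp I) (lg_step k) (clean k inp I o)) = iota 1 n
  <-> ~ pending231 I inp.
Proof.
have [N] := ubnP (run_length k inp I).
elim: N inp I o => // N IHN inp I o lt_size track; have [sorted_I _ _] := track.
case top: (top_min I inp).
  case: I top track sorted_I lt_size => [//|y I] top track _ lt_size.
  rewrite /run_length /= addnS iterSr lg_step_pop_clean // (pending231_pop top).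
  by apply: IHN; [move: lt_size; rewrite /run_length /=; lia | exact: on_track_pop].
case: inp top track lt_size => [|x rest] top track lt_size.
  case: I top track sorted_I {lt_size} => [_ /on_track_done <- _ | y I top _ sorted_yI].
    by rewrite /run_length /= muln0; split=> // _ [a [b [c [_ [[] | ]]]]].
  by rewrite top_min_sorted in top.
case ok: (okI I x).
  have -> : run_length k (x :: rest) I = run_length k rest (x :: I) + k.+1.
    by rewrite /run_length /=; lia.
  rewrite iterD iter_enter ?top // -pending231_enter //.
  by apply: IHN; [move: lt_size; rewrite /run_length /=; lia | exact: on_track_enter].
case: I ok top track sorted_I {lt_size} => [//|y I] /negbT not_ok /negbT no_pop.
move=> track sorted_yI.
have pending := pending231_stuck sorted_yI (on_track_blocked track not_ok) no_pop.
split=> [out_eq _ | /(_ pending) //].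
apply: (stuck_run track no_pop not_ok _ out_eq).
by rewrite /run_length /= mulnS; lia.
Qed.

Theorem mainTheorem12 (k : nat) (s : seq nat) :
  perm_eq s (iota 1 (size s)) ->
  (lg_sortable k s <-> avoids [:: 2; 3; 1] s).
Proof.
move=> perm_s; have track : on_track (size s) s [::] [::] by [].
have -> : lg_sortable k s <-> ~ pending231 [::] s.
  by rewrite /lg_sortable /lg_run mulnC -[_ * _]addn0; apply: (out_run_clean k track).
by rewrite /avoids; split=> no_pattern /pending231_nil.
Qed.
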